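(* Let $a,b\geq 1$ be integers. Let $x\in\Lambda^{a+b}$ satisfy $x_1+\cdots+x_{a+b}>b\,x_{a+b}$ and $x_{a+b}\geq 2x_a$. Then $y=T_{a,b}(x)$ satisfies $y_1+\cdots+y_{a+b}>b\,y_{a+b}$.
   Context: For $n\geq 1$ let $\Lambda^n=\{x\in\mathbb{R}^n : 0\leq x_1\leq\cdots\leq x_n\}$. For integers $a,b\geq 1$ the map $T_{a,b}:\Lambda^{a+b}\to\Lambda^{a+b}$ sends $x$ to the vector obtained by arranging $x_1,\ldots,x_a,\,x_{a+1}-x_a,\ldots,x_{a+b}-x_a$ in nondecreasing order. *)

From HB Require Import structures.
From mathcomp Require Import all_boot all_order all_algebra.
Set Implicit Arguments. Unset Strict Implicit. Unset Printing Implicit Defensive.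
Import Order.TTheory GRing.Theory Num.Theory.
Local Open Scope ring_scope.

(* Vectors of R^n are represented as sequences of length n; the paper's
   1-based coordinate x_i is  nth 0 x (i-1). *)

Definition Lambda (R : realFieldType) (n : nat) (x : seq R) : bool :=
  (size x == n) && sorted <=%R (0 :: x).

Definition T (R : realFieldType) (a b : nat) (x : seq R) : seq R :=
  sort <=%R (take a x ++ [seq t - nth 0 x a.-1 | t <- take b (drop a x)]).

From HB Require Import structures.
From mathcomp Require Import all_boot all_order all_algebra.
From mathcomp Require Import zify.
Set Implicit Arguments. Unset Strict Implicit. Unset Printing Implicit Defensive.
Import Order.TTheory GRing.Theory Num.Theory.
Local Open Scope ring_scope.

(* Write m = x_a and M = x_(a+b).  Every entry of y = T_(a,b)(x) is at most
   M - m: the first a entries are at most m, and m <= M - m because M >= 2m;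
   the others are x_(a+j) - m <= M - m.  As M - m is itself an entry, it is
   y_(a+b), while the sum of the entries drops by exactly b m.  Hence
   b y_(a+b) = b M - b m < sum x - b m = sum y. *)

Lemma nth_last_sorted_max (R : realDomainType) (y : seq R) (c : R) :
  sorted <=%R y -> c \in y -> {in y, forall t, t <= c} ->
  nth 0 y (size y).-1 = c.
Proof.
move=> sorted_y cy le_c; have y_gt0 : (0 < size y)%N by case: (y) cy.
apply/eqP; rewrite eq_le; apply/andP; split.
  by apply: le_c; rewrite mem_nth // prednK.
case/(nthP 0): cy => i i_lt <-.
apply: (sorted_leq_nth le_trans lexx 0 sorted_y); rewrite /in_mem /=.
- exact: i_lt.
- by rewrite ltn_predL.
by rewrite -ltnS prednK.
Qed.

Lemma size_Lambda (R : realFieldType) (n : nat) (x : seq R) :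
  Lambda n x -> size x = n.
Proof. by case/andP=> /eqP. Qed.

Lemma Lambda_nth_le (R : realFieldType) (n i j : nat) (x : seq R) :
  Lambda n x -> (i <= j)%N -> (j < n)%N -> nth 0 x i <= nth 0 x j.
Proof.
move=> /andP[/eqP size_x sorted_x] le_ij lt_jn.
have /= := sorted_leq_nth le_trans lexx 0 sorted_x i.+1 j.+1.
by apply; rewrite /in_mem /= ?size_x; lia.
Qed.

Lemma Lambda_le_last (R : realFieldType) (n : nat) (x : seq R) :
  Lambda n x -> {in x, forall t, t <= nth 0 x n.-1}.
Proof.
move=> x_Lambda t /(nthP 0) [i]; rewrite (size_Lambda x_Lambda) => i_lt <-.
by apply: (Lambda_nth_le x_Lambda); lia.
Qed.

Section TransformT.

Variables (R : realFieldType) (a b : nat) (x : seq R).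
Hypothesis size_x : size x = (a + b)%N.

Let m := nth 0 x a.-1.

Lemma take_drop_full : take b (drop a x) = drop a x.
Proof. by rewrite take_oversize // size_drop size_x addKn. Qed.

Lemma size_T : size (T a b x) = (a + b)%N.
Proof.
rewrite size_sort size_cat size_map take_drop_full size_drop size_take size_x.
by case: ifP; lia.
Qed.

Lemma sorted_T : sorted <=%R (T a b x).
Proof. by apply: sort_sorted; exact: le_total. Qed.

Lemma sum_T : \sum_(t <- T a b x) t = \sum_(t <- x) t - b%:R * m.
Proof.
rewrite (perm_big _ (permEl (perm_sort _ _))) big_cat /= big_map take_drop_full.
rewrite -[in X in _ = X - _](cat_take_drop a x) big_cat /= sumrB addrA.
by rewrite big_const_seq count_predT size_drop size_x addKn iter_addr_0 mulr_natl.
Qed.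

Lemma mem_last_T : (1 <= b)%N -> nth 0 x (a + b).-1 - m \in T a b x.
Proof.
move=> b_gt0; rewrite mem_sort mem_cat; apply/orP; right.
apply: map_f; rewrite take_drop_full; apply/(nthP 0); exists b.-1.
  by rewrite size_drop size_x; lia.
by rewrite nth_drop; congr nth; lia.
Qed.

Lemma T_le_last : (1 <= a)%N -> Lambda (a + b) x ->
  2 * m <= nth 0 x (a + b).-1 ->
  {in T a b x, forall t, t <= nth 0 x (a + b).-1 - m}.
Proof.
move=> a_gt0 x_Lambda le_2m t; rewrite mem_sort mem_cat => /orP[].
  case/(nthP 0) => i; rewrite size_takel ?size_x ?leq_addr // => i_lt.
  rewrite nth_take // => <-; apply: (@le_trans _ _ m).
    by apply: (Lambda_nth_le x_Lambda); lia.
  by rewrite lerBrDr -mulr2n -mulr_natl.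
case/mapP => u /mem_take/mem_drop u_x ->; rewrite lerD2r.
exact: Lambda_le_last u_x.
Qed.

End TransformT.

Theorem lemma5p1 (R : realFieldType) (a b : nat) (x : seq R) :
  (1 <= a)%N -> (1 <= b)%N -> Lambda (a + b) x ->
  b%:R * nth 0 x (a + b).-1 < \sum_(t <- x) t ->
  2 * nth 0 x a.-1 <= nth 0 x (a + b).-1 ->
  b%:R * nth 0 (T a b x) (a + b).-1 < \sum_(t <- T a b x) t.
Proof.
move=> a_gt0 b_gt0 x_Lambda lt_sum le_2m.
have size_x := size_Lambda x_Lambda.
have last_T : nth 0 (T a b x) (a + b).-1 = nth 0 x (a + b).-1 - nth 0 x a.-1.
  rewrite -[in LHS](size_T size_x).
  apply: (nth_last_sorted_max (sorted_T _ _ _) (mem_last_T size_x b_gt0)).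
  exact: T_le_last size_x a_gt0 x_Lambda le_2m.
rewrite last_T (sum_T size_x) mulrBr ltrD2r.
exact: lt_sum.
Qed.
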